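(* Suppose that condition (L) holds and $F\in e-{\mathcal B}-W^{p}(\Lambda \times X : Y).$ Let ${\mathrm R}$ be the collection of all sequences ${\bf b}=({\bf b}(m))_{m\in{\mathbb N}}$ in ${\mathbb R}^{n}$ such that ${\bf t}+{\bf b}(m)\in \Lambda$ for all ${\bf t}\in \Lambda$ and $m\in {\mathbb N}$, and let ${\mathcal B}$ be any collection of compact subsets of $X$ (such that each $x\in X$ belongs to some $B\in{\mathcal B}$). Then the function $F(\cdot;\cdot)$ is Weyl-$({\mathrm R},{\mathcal B},p)$-normal.
   Context: Standing setting: $(X,\|\cdot\|)$ and $(Y,\|\cdot\|_{Y})$ are complex Banach spaces; ${\mathcal B}$ is a non-empty collection of subsets of $X$ such that each $x\in X$ lies in some $B\in{\mathcal B}$; $\Omega=[0,1]^{n}$; $p\in[1,\infty)$ is a constant exponent; $\emptyset\neq\Lambda\subseteq{\mathbb R}^{n}$ satisfies $\Lambda+l\Omega\subseteq\Lambda$ for all $l>0$; $F:\Lambda\times X\rightarrow Y$. Condition (L): for all ${\bf t}\in\Lambda$, $x\in X$ and $l>0$, the function ${\bf u}\mapsto \|F({\bf t}+{\bf u};x)\|_{Y}$ belongs to $L^{p}(l\Omega)$. For functions $F,G:\Lambda\times X\to Y$ with $F({\bf t}+\cdot;x)-G({\bf t}+\cdot;x)\in L^{p}(l\Omega:Y)$ for all ${\bf t},x,l$, and $B\in{\mathcal B}$, set $D_{S_{l\Omega},B}^{p}(F,G):=\sup_{x\in B}\sup_{{\bf t}\in\Lambda} l^{-n/p}\|F({\bf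 t}+\cdot;x)-G({\bf t}+\cdot;x)\|_{L^{p}(l\Omega:Y)}$; the Weyl $p$-distance $D_{W,B}^{p}(F,G):=\lim_{l\rightarrow\infty}D_{S_{l\Omega},B}^{p}(F,G)$ exists (it is a pseudometric satisfying the triangle inequality). A trigonometric polynomial $P:\Lambda\times X\to Y$ is a finite linear combination of functions $e^{i[\lambda_{1}t_{1}+\cdots+\lambda_{n}t_{n}]}c(x)$ with $\lambda_{i}\in{\mathbb R}$ and $c:X\to Y$ continuous. $F\in e-{\mathcal B}-W^{p}(\Lambda\times X:Y)$ means: (L) holds and for every $B\in{\mathcal B}$ and $\epsilon>0$ there exist $l_{0}>0$ and a trigonometric polynomial $P$ with $\sup_{x\in B,{\bf t}\in\Lambda} l^{-n/p}\|P({\bf t}+\cdot;x)-F({\bf t}+\cdot;x)\|_{L^{p}(l\Omega:Y)}<\epsilon$ for all $l\geq l_{0}$ (equivalently, for each $B$ there are trigonometric polynomials $P_{m}$ with $D_{W,B}^{p}(F,P_{m})\to0$). $F$ is Weyl-$({\mathrm R},{\mathcal B},p)$-normal means: for every $B\in{\mathcal B}$ and every sequence $({\bf b}_{k})\in{\mathrm R}$ there exists a subsequence $({\bf b}_{k_{m}})$ such that $(F(\cdot+{\bf b}_{k_{m}};\cdot))_{m\in{\mathbb N}}$ is a Cauchy sequence with respect to $D_{W,B}^{p}(\cdot,\cdot)$. *)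

From HB Require Import structures.
From mathcomp Require Import all_boot all_order all_algebra.
From mathcomp Require Import all_classical all_reals all_analysis.
From mathcomp Require Import measurable_realfun.
Set Implicit Arguments. Unset Strict Implicit. Unset Printing Implicit Defensive.
Import Order.TTheory GRing.Theory Num.Theory.
Import numFieldNormedType.Exports.
Local Open Scope classical_set_scope.
Local Open Scope ring_scope.

Section WeylDefs.
Variable R : realType.

(* A complex normed space is encoded as a real normed space V with a real-   *)
(* linear J : V -> V (multiplication by i) with J (J v) = - v, and such that *)
(* the complex scalar a + i b acts by a *: v + b *: J v with norm            *)
(* |a + i b| * ||v||.                                                        *)
Definition cscale (V : normedModType R) (J : V -> V) (a b : R) (v : V) : V :=
  a *: v + b *: J v.

Definition complex_structure (V : normedModType R) (J : V -> V) : Prop :=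
  [/\ forall (a : R) (u v : V), J (a *: u + v) = a *: J u + J v,
      forall v : V, J (J v) = - v &
      forall (a b : R) (v : V), `|cscale J a b v| = Num.sqrt (a ^+ 2 + b ^+ 2) * `|v| ].

Definition tadd n (t u : n.-tuple R) : n.-tuple R :=
  [tuple tnth t i + tnth u i | i < n].

(* l * Omega = [0,l]^n *)
Definition cube n (l : R) : set (n.-tuple R) :=
  [set u | forall i : 'I_n, 0 <= tnth u i <= l].

Definition dotn n (lam t : n.-tuple R) : R := \sum_(i < n) tnth lam i * tnth t i.

(* iterated Lebesgue integral over [0,l]^n (Tonelli), for Borel functions *)
Fixpoint cube_iint (l : R) (n : nat) : (n.-tuple R -> \bar R) -> \bar R :=
  match n return (n.-tuple R -> \bar R) -> \bar R with
  | 0 => fun f => f [tuple]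
  | m.+1 => fun f =>
      (\int[@lebesgue_measure R]_(s in [set s : R | (0 <= s <= l)%R]) cube_iint l
          (fun v : m.-tuple R => f [tuple of s :: v]))%E
  end.

(* (upper) Lebesgue integral over [0,l]^n : infimum of the integrals of Borel *)
(* majorants; it is the Lebesgue integral for Lebesgue-measurable f >= 0.    *)
Definition cube_int n (l : R) (f : n.-tuple R -> \bar R) : \bar R :=
  ereal_inf [set cube_iint l g | g in
     [set g : n.-tuple R -> \bar R | measurable_fun setT g /\
        forall u, cube l u -> (f u <= g u)%E]].

Definition cube_null n (l : R) (N : set (n.-tuple R)) : Prop :=
  cube_int l (fun u => (\1_N u)%:E) = 0%E.

Definition strongly_measurable_on (V : normedModType R) n (l : R)
    (h : n.-tuple R -> V) : Prop :=
  exists s : nat -> n.-tuple R -> V,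
    (forall k, finite_set (range (s k)) /\
       forall y : V, measurable (s k @^-1` [set y])) /\
    exists N, cube_null l N /\
      forall u, cube l u -> ~ N u -> (s k u @[k --> \oo] --> h u).

Definition Lp_norm (V : normedModType R) n (p l : R) (h : n.-tuple R -> V) : \bar R :=
  ((cube_int l (fun u => (`|h u| `^ p)%:E)) `^ p^-1)%E.

Definition in_Lp (V : normedModType R) n (p l : R) (h : n.-tuple R -> V) : Prop :=
  strongly_measurable_on l h /\ (Lp_norm p l h < +oo)%E.

Section Weyl.
Variables (X Y : normedModType R) (n : nat) (p : R) (Lambda : set (n.-tuple R)).

Definition condL (F : n.-tuple R -> X -> Y) : Prop :=
  forall t x l, Lambda t -> 0 < l ->
    in_Lp (V := R^o) p l (fun u => `|F (tadd t u) x|).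

Definition DS (B : set X) (F G : n.-tuple R -> X -> Y) (l : R) : \bar R :=
  ereal_sup [set ((l `^ (- (n%:R / p)))%:E *
                   Lp_norm p l (fun u => (F (tadd t u) x - G (tadd t u) x)%R))%E
            | x in B & t in Lambda].

Definition DW (B : set X) (F G : n.-tuple R -> X -> Y) : \bar R :=
  lim (DS B F G l @[l --> +oo]).

(* trigonometric polynomials: finite sums of terms e^{i <lam_k, t>} alpha_k c_k(x), *)
(* with alpha_k = a_k + i b_k complex and c_k : X -> Y continuous              *)
Definition trig_poly (J : Y -> Y) (P : n.-tuple R -> X -> Y) : Prop :=
  exists (N : nat) (lam : 'I_N -> n.-tuple R) (a b : 'I_N -> R) (c : 'I_N -> X -> Y),
    (forall k, continuous (c k)) /\
    forall t x, P t x = \sum_(k < N)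
        cscale J (cos (dotn (lam k) t)) (sin (dotn (lam k) t))
               (cscale J (a k) (b k) (c k x)).

Definition eBWp (J : Y -> Y) (calB : set (set X)) (F : n.-tuple R -> X -> Y) : Prop :=
  condL F /\
  forall B, calB B -> forall eps : R, 0 < eps ->
    exists l0 : R, exists P, 0 < l0 /\ trig_poly J P /\
      (forall t x l, Lambda t -> 0 < l ->
          in_Lp p l (fun u => P (tadd t u) x - F (tadd t u) x)) /\
      forall l, l0 <= l -> (DS B P F l < eps%:E)%E.

Definition weyl_normal (calR : set (nat -> n.-tuple R)) (calB : set (set X))
    (F : n.-tuple R -> X -> Y) : Prop :=
  forall B, calB B -> forall b, calR b ->
    exists phi : nat -> nat, {homo phi : i j / (i < j)%N >-> (i < j)%N} /\
      forall eps : R, 0 < eps -> exists M : nat, forall i j, (M <= i)%N -> (M <= j)%N ->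
        (DW B (fun t x => F (tadd t (b (phi i))) x)
              (fun t x => F (tadd t (b (phi j))) x) < eps%:E)%E.

End Weyl.
End WeylDefs.

From Pilot Require Import Defs.
From HB Require Import structures.
From mathcomp Require Import all_boot all_order all_algebra.
From mathcomp Require Import all_classical all_reals all_analysis.
From mathcomp Require Import measurable_realfun.
From mathcomp Require Import ring lra.
Set Implicit Arguments. Unset Strict Implicit. Unset Printing Implicit Defensive.
Import Order.TTheory GRing.Theory Num.Theory.
Import numFieldNormedType.Exports.
Local Open Scope classical_set_scope.
Local Open Scope ring_scope.

(* Fix a compact [B] and an admissible sequence [b].  For every [k] choose a
   trigonometric polynomial [P_k] with [DS B P_k F l < 1/(k+1)] for all large [l].
   The coefficient functions of [P_k] are bounded on the compact [B], so the
   translates [P_k (. + b m)] and [P_k (. + b m')] differ uniformly by at most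
   [1/(k+1)] as soon as the finitely many numbers [cos <lam, b m>] and
   [sin <lam, b m>] are close enough for [m] and [m']; by pigeonhole this
   happens along an infinite set of indices.  Shrinking these sets for
   [k = 0, 1, 2, ...] and taking a diagonal subsequence [phi], for [i, j >= k]
   the difference [F (. + b (phi i)) - F (. + b (phi j))] is the sum of
   [(F - P_k) (. + b (phi i))], a uniformly small term and
   [(P_k - F) (. + b (phi j))], so its Stepanov distance, and hence its Weyl
   distance, is at most [9/(k+1)]. *)

Section CubeIntegral.
Variables (R : realType) (l : R).

Let I := [set s : R | 0 <= s <= l].

Let I_itv : I = `[0, l]%classic.
Proof. by apply/seteqP; split=> x /=; rewrite in_itv. Qed.

Let measurable_I : measurable I.
Proof. by rewrite I_itv; exact: measurable_itv. Qed.

Lemma cube_cons m s (v : m.-tuple R) :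
  cube l [tuple of s :: v] <-> I s /\ cube l v.
Proof.
split=> [cu|[Is cv] i].
  split=> [|i]; first by have := cu ord0; rewrite (tnth_nth 0).
  by have := cu (lift ord0 i); rewrite !(tnth_nth 0).
case: (unliftP ord0 i) => [j ->|->]; last by rewrite (tnth_nth 0).
by have := cv j; rewrite !(tnth_nth 0).
Qed.

Lemma eq_cube_iint m (g h : m.-tuple R -> \bar R) :
  (forall u, cube l u -> g u = h u) -> cube_iint l g = cube_iint l h.
Proof.
elim: m g h => [|m IH] g h gh /=; first by apply: gh => -[].
apply: eq_integral => s /[1!inE] Is; apply: IH => v cv.
by apply: gh; apply/cube_cons.
Qed.

Lemma cube_iint_ge0 m (g : m.-tuple R -> \bar R) :
  (forall u, cube l u -> (0 <= g u)%E) -> (0 <= cube_iint l g)%E.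
Proof.
elim: m g => [|m IH] g g0 /=; first by apply: g0 => -[].
apply: integral_ge0 => s Is; apply: IH => v cv.
by apply: g0; apply/cube_cons.
Qed.

Lemma measurable_consr m (g : m.+1.-tuple R -> \bar R) s :
  measurable_fun setT g ->
  measurable_fun setT (fun v : m.-tuple R => g [tuple of s :: v]).
Proof.
move=> mg.
have -> : (fun v : m.-tuple R => g [tuple of s :: v]) =
    g \o (fun v : m.-tuple R => [the m.+1.-tuple R of (fun=> s) v :: v]) by [].
apply: measurableT_comp => //; apply: measurable_cons => //; exact: measurable_cst.
Qed.

(* The parameter [t] makes the induction go through: the inner iterated
   integral depends measurably on the outer variable by Tonelli. *)
Lemma measurable_cube_iint m d (T : measurableType d) (G : T -> m.-tuple R -> \bar R) :
  measurable_fun setT (fun z : T * m.-tuple R => G z.1 z.2) ->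
  (forall t u, (0 <= G t u)%E) ->
  measurable_fun setT (fun t => cube_iint l (G t)).
Proof.
elim: m d T G => [|m IH] d T G mG G0 /=.
  have -> : (fun t => G t [tuple]) =
      (fun z : T * 0.-tuple R => G z.1 z.2) \o (fun t => (t, [tuple])) by [].
  exact: measurableT_comp.
pose H (ts : T * R) (v : m.-tuple R) := G ts.1 [tuple of ts.2 :: v].
have mH : measurable_fun setT (fun z : (T * R) * m.-tuple R => H z.1 z.2).
  have -> : (fun z : (T * R) * m.-tuple R => H z.1 z.2) =
      (fun z : T * m.+1.-tuple R => G z.1 z.2) \o
      (fun z : (T * R) * m.-tuple R => (z.1.1, [the m.+1.-tuple R of z.1.2 :: z.2])) by [].
  apply: measurableT_comp => //; apply: measurable_fun_pair.
    exact: measurableT_comp measurable_fst measurable_fst.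
  apply: measurable_cons; last exact: measurable_snd.
  exact: measurableT_comp measurable_snd measurable_fst.
have -> : (fun t => \int[lebesgue_measure]_(s in I) cube_iint l (fun v => G t [tuple of s :: v]))%E
    = fubini_F lebesgue_measure (fun z : T * R => cube_iint l (H z) * (\1_I z.2)%:E)%E.
  apply/funext => t; rewrite /fubini_F [LHS]integral_mkcond [RHS]integral_mkcond.
  apply: eq_integral => s _; rewrite /patch in_setT indicE.
  by case: ifPn => _; rewrite ?mule1 ?mule0.
apply: measurable_fun_fubini_tonelli_F.
  apply: emeasurable_funM; first exact: IH (fun _ _ => G0 _ _).
  apply/measurable_EFinP; apply: measurableT_comp; last exact: measurable_snd.
  exact: measurable_indic.
move=> z; apply: mule_ge0; last by rewrite lee_fin indicE.
by apply: cube_iint_ge0 => u _; exact: G0.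
Qed.

Lemma measurable_cube_iint_cons m (g : m.+1.-tuple R -> \bar R) :
  measurable_fun setT g -> (forall u, (0 <= g u)%E) ->
  measurable_fun setT (fun s : R => cube_iint l (fun v : m.-tuple R => g [tuple of s :: v])).
Proof.
move=> mg g0; apply: (@measurable_cube_iint m _ R (fun s v => g [tuple of s :: v])) => //.
have -> : (fun z : R * m.-tuple R => g [tuple of z.1 :: z.2]) =
    g \o (fun z : R * m.-tuple R => [the m.+1.-tuple R of z.1 :: z.2]) by [].
exact: measurableT_comp mg (measurable_cons measurable_fst measurable_snd).
Qed.

Lemma cube_iintD m (g h : m.-tuple R -> \bar R) :
  measurable_fun setT g -> measurable_fun setT h ->
  (forall u, (0 <= g u)%E) -> (forall u, (0 <= h u)%E) ->
  cube_iint l (fun u => g u + h u)%E = (cube_iint l g + cube_iint l h)%E.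
Proof.
elim: m g h => [|m IH] g h mg mh g0 h0 //=.
rewrite -ge0_integralD //; last 4 first.
- by move=> s _; apply: cube_iint_ge0 => u _.
- by apply: measurable_funTS; exact: measurable_cube_iint_cons.
- by move=> s _; apply: cube_iint_ge0 => u _.
- by apply: measurable_funTS; exact: measurable_cube_iint_cons.
by apply: eq_integral => s _; apply: IH => //; exact: measurable_consr.
Qed.

Lemma cube_iintZ m (g : m.-tuple R -> \bar R) (c : R) :
  measurable_fun setT g -> (forall u, (0 <= g u)%E) -> 0 <= c ->
  cube_iint l (fun u => c%:E * g u)%E = (c%:E * cube_iint l g)%E.
Proof.
elim: m g => [|m IH] g mg g0 c0 //=.
rewrite -ge0_integralZl //; last 2 first.
- by apply: measurable_funTS; exact: measurable_cube_iint_cons.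
- by move=> s _; apply: cube_iint_ge0 => u _.
by apply: eq_integral => s _; apply: IH => //; exact: measurable_consr.
Qed.

Lemma cube_iint_cst m (k : R) : 0 < l ->
  cube_iint l (fun _ : m.-tuple R => k%:E) = (k * l ^+ m)%:E.
Proof.
move=> l0; elim: m k => [|m IH] k /=; first by rewrite mulr1.
under eq_integral => s _ do rewrite IH.
rewrite -/I I_itv integral_cst //.
have := @lebesgue_measure_itv R `[0%R, l]; rewrite /= lte_fin l0 -EFinD subr0 => ->.
by rewrite -EFinM exprSr mulrA.
Qed.

End CubeIntegral.

Section UpperIntegral.
Variables (R : realType) (n : nat) (l : R).

Lemma cube_int_ge0 (f : n.-tuple R -> \bar R) :
  (forall u, cube l u -> (0 <= f u)%E) -> (0 <= cube_int l f)%E.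
Proof.
move=> f0; apply/ereal_infP => _ [g [_ fg] <-].
by apply: cube_iint_ge0 => u cu; exact: le_trans (f0 u cu) (fg u cu).
Qed.

Lemma cube_int_le_iint (f g : n.-tuple R -> \bar R) :
  measurable_fun setT g -> (forall u, cube l u -> (f u <= g u)%E) ->
  (cube_int l f <= cube_iint l g)%E.
Proof. by move=> mg fg; apply: ge_ereal_inf; exists (cube_iint l g) => //; exists g. Qed.

Lemma cube_int_lt_majorant (f : n.-tuple R -> \bar R) (c : \bar R) :
  (forall u, cube l u -> (0 <= f u)%E) -> (cube_int l f < c)%E ->
  exists g : n.-tuple R -> \bar R, [/\ measurable_fun setT g, (forall u, 0 <= g u)%E,
    (forall u, cube l u -> f u <= g u)%E & (cube_iint l g < c)%E].
Proof.
move=> f0 /ereal_inf_lt[_ [g [mg fg] <-] gc].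
exists (fun u => maxe (g u) 0); split => [|u|u cu|].
- by apply: measurable_maxe => //; exact: measurable_cst.
- by rewrite le_max lexx orbT.
- by rewrite le_max fg.
rewrite (@eq_cube_iint _ _ _ _ g) // => u cu.
by apply/max_idPl; exact: le_trans (f0 u cu) (fg u cu).
Qed.

End UpperIntegral.

Section ScaledLpNorm.
Variables (R : realType) (V : normedModType R) (n : nat) (p l : R).
Hypotheses (p0 : 0 < p) (l0 : 0 < l).

Lemma powR_mean_cancel (c : R) : 0 <= c ->
  l `^ (- (n%:R / p)) * (c `^ p * l ^+ n) `^ p^-1 = c.
Proof.
move=> c0.
rewrite powRM ?powR_ge0 ?exprn_ge0 ?ltW // -powRrM mulfV ?gt_eqF // powRr1 //.
rewrite -powR_mulrn ?ltW // -powRrM mulrCA powRN mulVf ?mulr1 //.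
by rewrite gt_eqF // powR_gt0.
Qed.

Variable h : n.-tuple R -> V.

Lemma scaled_Lp_norm_le c : 0 <= c ->
  ((l `^ (- (n%:R / p)))%:E * Lp_norm p l h <= c%:E)%E =
  (cube_int l (fun u => (`|h u| `^ p)%:E) <= (c `^ p * l ^+ n)%:E)%E.
Proof.
move=> c0; rewrite /Lp_norm.
have : (0 <= cube_int l (fun u => (`|h u| `^ p)%:E))%E.
  by apply: cube_int_ge0 => u _; rewrite lee_fin powR_ge0.
case: (cube_int _ _) => [r r0| _|//] /=.
  rewrite -EFinM !lee_fin -[X in _ <= X](powR_mean_cancel c0).
  rewrite ler_pM2l ?powR_gt0 // (le_mono_in (gt0_ltr_powR _)) ?invr_gt0 //.
  by rewrite nnegrE mulr_ge0 ?powR_ge0 ?exprn_ge0 ?ltW.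
by rewrite invr_eq0 gt_eqF // mulry gtr0_sg ?powR_gt0 // mul1e.
Qed.

Lemma cube_int_lt_of_scaled_Lp_norm c :
  ((l `^ (- (n%:R / p)))%:E * Lp_norm p l h < c%:E)%E ->
  (cube_int l (fun u => (`|h u| `^ p)%:E) < (c `^ p * l ^+ n)%:E)%E.
Proof.
set S := (_ * _)%E => Sc.
have S0 : (0 <= S)%E by rewrite mule_ge0 ?lee_fin ?powR_ge0 ?poweR_ge0.
have Sfin : S \is a fin_num by rewrite ge0_fin_numE // (lt_trans Sc) ?ltry.
have [s0 sc] : 0 <= fine S /\ fine S < c by rewrite -lee_fin -lte_fin fineK.
have hS : (cube_int l (fun u => (`|h u| `^ p)%:E) <= (fine S `^ p * l ^+ n)%:E)%E.
  by rewrite -scaled_Lp_norm_le // fineK.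
apply: le_lt_trans hS _; rewrite lte_fin ltr_pM2r ?exprn_gt0 // gt0_ltr_powR // nnegrE.
exact: le_trans s0 (ltW sc).
Qed.

End ScaledLpNorm.

Section StepanovDistance.
Variables (R : realType) (X Y : normedModType R) (n : nat) (p : R).
Variable Lambda : set (n.-tuple R).
Hypothesis p0 : 0 < p.

Lemma DS_le (B : set X) (F G : n.-tuple R -> X -> Y) (l c : R) : 0 < l -> 0 <= c ->
  (forall x t, B x -> Lambda t ->
    (cube_int l (fun u => (`|F (tadd t u) x - G (tadd t u) x| `^ p)%:E)
      <= (c `^ p * l ^+ n)%:E)%E) ->
  (DS p Lambda B F G l <= c%:E)%E.
Proof.
move=> l0 c0 Fc; apply/ereal_supP => _ [x Bx [t Lt <-]].
by rewrite scaled_Lp_norm_le //; exact: Fc.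
Qed.

Lemma cube_int_lt_of_DS_lt (B : set X) (F G : n.-tuple R -> X -> Y) (l c : R) x t :
  0 < l -> B x -> Lambda t -> (DS p Lambda B F G l < c%:E)%E ->
  (cube_int l (fun u => (`|F (tadd t u) x - G (tadd t u) x| `^ p)%:E)
      < (c `^ p * l ^+ n)%:E)%E.
Proof.
move=> l0 Bx Lt /(le_lt_trans _) DSc; apply: cube_int_lt_of_scaled_Lp_norm => //.
by apply: DSc; apply: ereal_sup_ubound; exists x => //; exists t.
Qed.

(* Where [DS] has no limit at [+oo], [DW] is the junk value [0]: hence [0 < eps]. *)
Lemma DW_lt (B : set X) (F G : n.-tuple R -> X -> Y) (L a eps : R) :
  (forall l, L <= l -> (DS p Lambda B F G l <= a%:E)%E) -> a < eps -> 0 < eps ->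
  (DW p Lambda B F G < eps%:E)%E.
Proof.
move=> DSa ae eps0; rewrite /DW.
have [cvgDS|/dvgP ->] := pselect (cvg (DS p Lambda B F G l @[l --> +oo])); last first.
  by rewrite lte_fin.
apply: le_lt_trans (_ : a%:E < eps%:E)%E; last by rewrite lte_fin.
by apply: lime_le => //; exists L; split => [|l /ltW]; [exact: num_real|exact: DSa].
Qed.

End StepanovDistance.

Section Translation.
Variables (R : realType) (n : nat).
Implicit Types t u b lam : n.-tuple R.

Lemma tnth_tadd t u i : tnth (tadd t u) i = tnth t i + tnth u i.
Proof. exact: tnth_mktuple. Qed.

Lemma taddAC t u b : tadd (tadd t u) b = tadd (tadd t b) u.
Proof. by apply: eq_from_tnth => i; rewrite !tnth_tadd addrAC. Qed.

Lemma dotn_tadd lam t b : dotn lam (tadd t b) = dotn lam t + dotn lam b.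
Proof.
by rewrite /dotn -big_split; apply: eq_bigr => i _; rewrite tnth_tadd mulrDr.
Qed.

End Translation.

Section ComplexStructure.
Variables (R : realType) (Y : normedModType R) (J : Y -> Y).
Hypothesis csJ : complex_structure J.

Lemma norm_J v : `|J v| = `|v|.
Proof.
case: csJ => _ _ /(_ 0 1 v); rewrite /Defs.cscale scale0r add0r scale1r.
by rewrite expr0n add0r expr1n sqrtr1 mul1r.
Qed.

Lemma norm_cscale_le a b v : `|Defs.cscale J a b v| <= (`|a| + `|b|) * `|v|.
Proof. by rewrite mulrDl; apply: le_trans (ler_normD _ _) _; rewrite !normrZ norm_J. Qed.

Lemma cscaleB a b a' b' v :
  Defs.cscale J a b v - Defs.cscale J a' b' v = Defs.cscale J (a - a') (b - b') v.
Proof. by rewrite /Defs.cscale !scalerBl opprD !addrA (addrAC (a *: v)). Qed.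

Lemma norm_cscale_cis_shift_le (A x1 x2 eta : R) (w : Y) :
  `|cos x1 - cos x2| <= eta -> `|sin x1 - sin x2| <= eta ->
  `|Defs.cscale J (cos (A + x1)) (sin (A + x1)) w - Defs.cscale J (cos (A + x2)) (sin (A + x2)) w|
    <= 4 * eta * `|w|.
Proof.
move=> dcos dsin; have eta0 : 0 <= eta := le_trans (normr_ge0 _) dcos.
rewrite cscaleB; apply: le_trans (norm_cscale_le _ _ _) _.
apply: ler_wpM2r => //; rewrite !cosD !sinD.
have -> : cos A * cos x1 - sin A * sin x1 - (cos A * cos x2 - sin A * sin x2) =
    cos A * (cos x1 - cos x2) - sin A * (sin x1 - sin x2) by ring.
have -> : sin A * cos x1 + cos A * sin x1 - (sin A * cos x2 + cos A * sin x2) =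
    sin A * (cos x1 - cos x2) + cos A * (sin x1 - sin x2) by ring.
have trig_le (s c : R) : `|s| <= 1 -> `|c| <= 1 ->
    `|s| * `|cos x1 - cos x2| + `|c| * `|sin x1 - sin x2| <= 2 * eta.
  by move=> s1 c1; rewrite mulr2n mulrDl mul1r; apply: lerD; rewrite -[eta]mul1r; apply: ler_pM.
have -> : 4 * eta = 2 * eta + 2 * eta by ring.
apply: lerD; [apply: le_trans (ler_normB _ _) _ | apply: le_trans (ler_normD _ _) _];
  by rewrite !normrM trig_le ?cos_max ?sin_max.
Qed.

Lemma norm_trig_sum_shift_le n N (lam : 'I_N -> n.-tuple R) (a b : 'I_N -> R)
    (c : 'I_N -> Y) (w b1 b2 : n.-tuple R) (M : 'I_N -> R) (eta : R) :
  (forall q, `|c q| <= M q) ->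
  (forall q, `|cos (dotn (lam q) b1) - cos (dotn (lam q) b2)| <= eta /\
             `|sin (dotn (lam q) b1) - sin (dotn (lam q) b2)| <= eta) ->
  `|\sum_(q < N) Defs.cscale J (cos (dotn (lam q) (tadd w b1))) (sin (dotn (lam q) (tadd w b1)))
        (Defs.cscale J (a q) (b q) (c q))
    - \sum_(q < N) Defs.cscale J (cos (dotn (lam q) (tadd w b2))) (sin (dotn (lam q) (tadd w b2)))
        (Defs.cscale J (a q) (b q) (c q))|
  <= 4 * eta * \sum_(q < N) (`|a q| + `|b q|) * M q.
Proof.
move=> cM shift_eta; rewrite -sumrB mulr_sumr.
apply: le_trans (ler_norm_sum _ _ _) _; apply: ler_sum => q _.
have [dcos dsin] := shift_eta q; have eta0 : 0 <= eta := le_trans (normr_ge0 _) dcos.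
rewrite !dotn_tadd; apply: le_trans (norm_cscale_cis_shift_le _ _ dcos dsin) _.
rewrite ler_wpM2l ?mulr_ge0 //; apply: le_trans (norm_cscale_le _ _ _) _.
by rewrite ler_wpM2l ?addr_ge0.
Qed.

End ComplexStructure.

Definition cofinal (S : nat -> Prop) := forall N, exists m, (N <= m)%N /\ S m.

Lemma cofinalT : cofinal (fun=> True).
Proof. by move=> N; exists N. Qed.

Section CofinalOscillation.
Variable R : realType.

(* Either cofinally many values lie in [[c, c + eta]], or eventually all lie
   above it and the interval shrinks by [eta]. *)
Lemma cofinal_subset_oscillation_le (K : nat) (S : nat -> Prop) (f : nat -> R) (c eta : R) :
  0 < eta -> cofinal S -> (forall m, S m -> c <= f m <= c + K%:R * eta) ->
  exists S', [/\ cofinal S', (forall m, S' m -> S m) &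
     forall m m', S' m -> S' m' -> `|f m - f m'| <= eta].
Proof.
elim: K S c => [|K IH] S c eta0 cofS fS.
  exists S; split => // m m' /fS + /fS; rewrite mul0r addr0 -!eq_le => /eqP-> /eqP->.
  by rewrite subrr normr0 ltW.
have [cofS1|ncofS1] := pselect (cofinal (fun m => S m /\ f m <= c + eta)).
  exists (fun m => S m /\ f m <= c + eta); split => [//|m []//|m m' [Sm fm] [Sm' fm']].
  move: (fS m Sm) (fS m' Sm') => /andP[? _] /andP[? _].
  by rewrite ler_norml; apply/andP; split; lra.
have cofS2 : cofinal (fun m => S m /\ c + eta < f m).
  have [N1 N1P] : exists N1, forall m, (N1 <= m)%N -> ~ (S m /\ f m <= c + eta).
    by move/existsNP: ncofS1 => [N1 /forallNP N1P]; exists N1 => m N1m Sm; apply: (N1P m).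
  move=> N; have [m [Nm Sm]] := cofS (maxn N N1).
  exists m; split; first exact: leq_trans (leq_maxl _ _) Nm.
  split => //; rewrite ltNge; apply/negP => fm.
  by apply: (N1P m); [exact: leq_trans (leq_maxr _ _) Nm | split].
have [|S' [cofS' S'S osc]] := IH _ (c + eta) eta0 cofS2.
  move=> m [Sm fm]; case/andP: (fS m Sm) => _ fmK; rewrite ltW //=.
  by move: fmK; rewrite -natr1 mulrDl mul1r; lra.
by exists S'; split => // m /S'S [].
Qed.

Lemma cofinal_subset_oscillations_le (I : eqType) (s : seq I)
    (f : I -> nat -> R) (S : nat -> Prop) (eta : R) :
  0 < eta -> cofinal S -> (forall q m, `|f q m| <= 1) ->
  exists S', [/\ cofinal S', (forall m, S' m -> S m) &
    forall q m m', q \in s -> S' m -> S' m' -> `|f q m - f q m'| <= eta].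
Proof.
move=> eta0 cofS f1; elim: s => [|q s [S1 [cofS1 S1S osc1]]].
  by exists S; split => // q m m'; rewrite in_nil.
pose K := (Num.truncn (2 / eta)).+1.
have Keta : 2 < K%:R * eta by rewrite -ltr_pdivrMr //; exact: truncnS_gt.
have [|S2 [cofS2 S2S1 osc2]] :=
    cofinal_subset_oscillation_le (K := K) (f := f q) (c := -1) eta0 cofS1.
  by move=> m _; move: (f1 q m); rewrite ler_norml => /andP[? ?]; apply/andP; split; lra.
exists S2; split => [//|m /S2S1/S1S //|q' m m'].
by rewrite in_cons => /orP[/eqP-> | qs] Sm Sm'; [exact: osc2 | apply: osc1 => //; exact: S2S1].
Qed.

End CofinalOscillation.

Lemma diagonal_subsequence (rel : nat -> nat -> nat -> Prop) :
  (forall k S, cofinal S -> exists S', [/\ cofinal S', (forall m, S' m -> S m) &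
     forall m m', S' m -> S' m' -> rel k m m']) ->
  exists phi : nat -> nat, {homo phi : i j / (i < j)%N >-> (i < j)%N} /\
    forall k i j, (k <= i)%N -> (k <= j)%N -> rel k (phi i) (phi j).
Proof.
move=> shrink.
have /choice[next nextP] : forall kS : nat * (nat -> Prop), exists S', cofinal kS.2 ->
    [/\ cofinal S', (forall m, S' m -> kS.2 m) & forall m m', S' m -> S' m' -> rel kS.1 m m'].
  move=> [k S]; have [/(shrink k)[S' S'P]|nS] := pselect (cofinal S).
    by exists S'.
  by exists S.
pose fix Sq k := if k is k'.+1 then next (k, Sq k') else next (0%N, fun=> True).
have cofSq k : cofinal (Sq k).
  by elim: k => [|k IH]; [case: (nextP (0%N, fun=> True) cofinalT) | case: (nextP (k.+1, Sq k) IH)].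
have SqP k : [/\ forall m, Sq k.+1 m -> Sq k m & forall m m', Sq k m -> Sq k m' -> rel k m m'].
  have [_ SqS _] := nextP (k.+1, Sq k) (cofSq k); split => //.
  case: k {SqS} => [|k]; first by case: (nextP (0%N, fun=> True) cofinalT).
  by case: (nextP (k.+1, Sq k) (cofSq k)).
have Sq_nested k i m : (k <= i)%N -> Sq i m -> Sq k m.
  move/subnK <-; elim: (i - k)%N => [//|j IH] /(SqP _).1; exact: IH.
have /choice[pick pickP] : forall kN : nat * nat, exists m, (kN.2 < m)%N /\ Sq kN.1 m.
  by move=> [k N]; have [m [Nm Sm]] := cofSq k N.+1; exists m.
pose fix phi k := if k is k'.+1 then pick (k, phi k') else pick (0%N, 0%N).
have phiS k : Sq k (phi k).
  by case: k => [|k]; [case: (pickP (0%N, 0%N)) | case: (pickP (k.+1, phi k))].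
exists phi; split.
  by apply: homo_ltn => [i j k|k]; [exact: ltn_trans | case: (pickP (k.+1, phi k))].
move=> k i j ki kj; apply: (SqP k).2; exact: Sq_nested (phiS _).
Qed.

Section TrigPolyShift.
Variables (R : realType) (X Y : normedModType R) (J : Y -> Y).
Hypothesis csJ : complex_structure J.

Lemma continuous_bounded_on_compact (B : set X) (c : X -> Y) :
  compact B -> continuous c -> exists M, forall x, B x -> `|c x| <= M.
Proof.
move=> cB cc.
have [M [_ HM]] := compact_bounded (continuous_compact (continuous_subspaceT cc) cB).
by exists (M + 1) => x Bx; apply: (HM (M + 1)); [rewrite ltrDl | exists x].
Qed.

Lemma trig_poly_shift_cofinal n (B : set X) (P : n.-tuple R -> X -> Y)
    (b : nat -> n.-tuple R) (d : R) (S : nat -> Prop) :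
  compact B -> trig_poly J P -> 0 < d -> cofinal S ->
  exists S', [/\ cofinal S', (forall m, S' m -> S m) &
    forall m m', S' m -> S' m' -> forall x w, B x ->
      `|P (tadd w (b m)) x - P (tadd w (b m')) x| <= d].
Proof.
move=> cB [N [lam [a [a' [c [cc Pdef]]]]]] d0 cofS.
have /choice[M cM] : forall q, exists M, forall x, B x -> `|c q x| <= M.
  by move=> q; exact: continuous_bounded_on_compact.
pose C := \sum_(q < N) (`|a q| + `|a' q|) * `|M q|.
have C0 : 0 <= C by apply: sumr_ge0 => q _; rewrite mulr_ge0 ?addr_ge0.
pose eta := d / (4 * C + 1). (* so that [4 * eta * C <= d], also when [C = 0] *)
have eta0 : 0 < eta by rewrite divr_gt0 // ltr_wpDl // mulr_ge0.
have [S1 [cofS1 S1S osc_cos]] := cofinal_subset_oscillations_le (enum 'I_N)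
   (f := fun q m => cos (dotn (lam q) (b m))) eta0 cofS (fun q m => cos_max _).
have [S2 [cofS2 S2S1 osc_sin]] := cofinal_subset_oscillations_le (enum 'I_N)
   (f := fun q m => sin (dotn (lam q) (b m))) eta0 cofS1 (fun q m => sin_max _).
exists S2; split => [//|m /S2S1/S1S //|m m' Sm Sm' x w Bx].
have cxM q : `|c q x| <= `|M q| := le_trans (cM q x Bx) (ler_norm _).
rewrite !Pdef; apply: le_trans (norm_trig_sum_shift_le csJ _ _ _ cxM _) _.
  move=> q; split; first by apply: osc_cos; rewrite ?mem_enum //; exact: S2S1.
  by apply: osc_sin; rewrite ?mem_enum.
have -> : 4 * eta * C = d * (4 * C / (4 * C + 1)) by rewrite /eta; ring.
rewrite -[leRHS]mulr1 ler_wpM2l ?(ltW d0) // ler_pdivrMr ?mul1r ?lerDl //.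
by rewrite ltr_wpDl // mulr_ge0.
Qed.

End TrigPolyShift.

Section ThreeTermEstimate.
Variables (R : realType) (X Y : normedModType R) (n : nat) (p : R).
Variable Lambda : set (n.-tuple R).
Hypothesis p1 : 1 <= p.

Let p0 : 0 < p := lt_le_trans ltr01 p1.

Lemma powR_add3_le (x y z : R) : 0 <= x -> 0 <= y -> 0 <= z ->
  (x + y + z) `^ p <= 3 `^ p * (x `^ p + y `^ p + z `^ p).
Proof.
move=> x0 y0 z0; pose M := Num.max x (Num.max y z).
have M0 : 0 <= M by rewrite le_max x0.
have xyzM : x + y + z <= 3 * M.
  have : x <= M by rewrite le_max lexx.
  have : y <= M by rewrite !le_max lexx orbT.
  have : z <= M by rewrite !le_max lexx !orbT.
  lra.
apply: le_trans (ge0_ler_powR (ltW p0) _ _ xyzM) _; rewrite ?nnegrE ?addr_ge0 ?mulr_ge0 //.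
rewrite powRM // ler_wpM2l ?powR_ge0 //.
have := powR_ge0 x p; have := powR_ge0 y p; have := powR_ge0 z p.
have : M = x \/ M = y \/ M = z by rewrite /M; case: (leP y z); case: (leP x _); tauto.
by case=> [->|[->|->]]; lra.
Qed.

Lemma powR_norm_sub3_le (a b c e : Y) :
  `|a - e| `^ p <= 3 `^ p * (`|b - a| `^ p + `|c - e| `^ p + `|b - c| `^ p).
Proof.
have ae : `|a - e| <= `|b - a| + `|c - e| + `|b - c|.
  by have := ler_distD b a e; have := ler_distD c b e; rewrite (distrC a b); lra.
apply: le_trans (powR_add3_le _ _ _) => //.
by apply: ge0_ler_powR; rewrite ?nnegrE ?addr_ge0 // ltW.
Qed.

(* The bound uses majorants of the two small terms rather than Minkowski's
   inequality, which is not available for the upper integral [cube_int]. *)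
Lemma cube_int_sub3_le (l d : R) (A B C D : n.-tuple R -> Y) : 0 < l -> 0 <= d ->
  (cube_int l (fun u => (`|B u - A u| `^ p)%:E) < (d `^ p * l ^+ n)%:E)%E ->
  (cube_int l (fun u => (`|C u - D u| `^ p)%:E) < (d `^ p * l ^+ n)%:E)%E ->
  (forall u, `|B u - C u| <= d) ->
  (cube_int l (fun u => (`|A u - D u| `^ p)%:E) <= ((9 * d) `^ p * l ^+ n)%:E)%E.
Proof.
move=> l0 d0 BA CD BC.
have powR_ge0E (f : n.-tuple R -> R) u : cube l u -> (0 <= (f u `^ p)%:E)%E.
  by rewrite lee_fin powR_ge0.
have [g1 [mg1 g1_0 g1_maj g1_lt]] := cube_int_lt_majorant (powR_ge0E _) BA.
have [g2 [mg2 g2_0 g2_maj g2_lt]] := cube_int_lt_majorant (powR_ge0E _) CD.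
pose G u := ((3 `^ p)%:E * (g1 u + g2 u + (d `^ p)%:E))%E.
have mg12 : measurable_fun setT (fun u => g1 u + g2 u)%E by exact: emeasurable_funD.
have mg12d : measurable_fun setT (fun u => g1 u + g2 u + (d `^ p)%:E)%E.
  by apply: emeasurable_funD => //; exact: measurable_cst.
have g12_0 u : (0 <= g1 u + g2 u)%E by rewrite adde_ge0.
have g12d_0 u : (0 <= g1 u + g2 u + (d `^ p)%:E)%E by rewrite adde_ge0 // lee_fin powR_ge0.
have mG : measurable_fun setT G by exact: measurable_funeM.
apply: le_trans (cube_int_le_iint mG _) _.
  move=> u cu; apply: le_trans (_ : (3 `^ p * (`|B u - A u| `^ p + `|C u - D u| `^ p
      + `|B u - C u| `^ p))%:E <= _)%E; first by rewrite lee_fin powR_norm_sub3_le.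
  rewrite EFinM lee_wpmul2l ?lee_fin ?powR_ge0 // !EFinD.
  by rewrite !leeD ?g1_maj ?g2_maj // lee_fin ge0_ler_powR ?nnegrE ?(ltW p0).
rewrite cube_iintZ ?powR_ge0 // cube_iintD //; last by move=> u; rewrite lee_fin powR_ge0.
rewrite cube_iintD // cube_iint_cst //.
have := cube_iint_ge0 (l := l) (fun u _ => g1_0 u).
have := cube_iint_ge0 (l := l) (fun u _ => g2_0 u).
move: g1_lt g2_lt; case: (cube_iint l g1) => // r1; case: (cube_iint l g2) => // r2.
rewrite !lte_fin !lee_fin => r1_lt r2_lt r2_0 r1_0.
have three_le : 3 <= 3 `^ p by rewrite -{1}(powRr1 (_ : 0 <= 3 :> R)) // ler_powR // ler1n.
rewrite (_ : 9 * d = 3 * 3 * d) ?powRM ?mulr_ge0 //; last by ring.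
rewrite -!mulrA ler_wpM2l ?powR_ge0 //; apply: le_trans (_ : 3 * (d `^ p * l ^+ n) <= _).
  by lra.
by rewrite ler_wpM2r // mulr_ge0 ?powR_ge0 ?exprn_ge0 ?ltW.
Qed.

Lemma DS_shift_le (B : set X) (F P : n.-tuple R -> X -> Y) (b1 b2 : n.-tuple R) (l d : R) :
  0 < l -> 0 <= d ->
  (forall t, Lambda t -> Lambda (tadd t b1)) -> (forall t, Lambda t -> Lambda (tadd t b2)) ->
  (DS p Lambda B P F l < d%:E)%E ->
  (forall x w, B x -> `|P (tadd w b1) x - P (tadd w b2) x| <= d) ->
  (DS p Lambda B (fun t x => F (tadd t b1) x) (fun t x => F (tadd t b2) x) l
     <= (9 * d)%:E)%E.
Proof.
move=> l0 d0 Lb1 Lb2 DSPF Pb12; apply: DS_le; rewrite ?mulr_ge0 // => x t Bx Lt.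
have PF1 := cube_int_lt_of_DS_lt p0 l0 Bx (Lb1 t Lt) DSPF.
have PF2 := cube_int_lt_of_DS_lt p0 l0 Bx (Lb2 t Lt) DSPF.
under eq_fun => u do rewrite !(taddAC t u).
apply: (cube_int_sub3_le l0 d0 PF1 PF2) => u.
by rewrite -!(taddAC t u); exact: Pb12.
Qed.

End ThreeTermEstimate.

Theorem theorem3p8 (R : realType)
    (X : completeNormedModType R) (JX : X -> X)
    (Y : completeNormedModType R) (JY : Y -> Y)
    (n : nat) (p : R) (Lambda : set (n.-tuple R))
    (calB : set (set X)) (F : n.-tuple R -> X -> Y) :
  complex_structure JX -> complex_structure JY ->
  1 <= p ->
  Lambda !=set0 ->
  (forall l : R, 0 < l -> forall t u, Lambda t -> cube l u -> Lambda (tadd t u)) ->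
  calB !=set0 ->
  (forall x : X, exists B, calB B /\ B x) ->
  (forall B, calB B -> compact B) ->
  condL p Lambda F ->
  eBWp p Lambda JY calB F ->
  weyl_normal p Lambda
    [set b : nat -> n.-tuple R | forall t m, Lambda t -> Lambda (tadd t (b m))]
    calB F.
Proof.
move=> _ csY p1 _ _ _ _ compactB _ [_ approx] B calB_B b Rb.
pose dk (k : nat) : R := k.+1%:R^-1.
have dk0 k : 0 < dk k by rewrite invr_gt0.
have /choice[LP LP_P] : forall k, exists LP : R * (n.-tuple R -> X -> Y),
    [/\ 0 < LP.1, trig_poly JY LP.2 &
        forall l, LP.1 <= l -> (DS p Lambda B LP.2 F l < (dk k)%:E)%E].
  move=> k; have [l0 [P [l00 [tP [_ DSP]]]]] := approx B calB_B _ (dk0 k).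
  by exists (l0, P).
have [|phi [phi_incr phi_close]] := diagonal_subsequence (rel := fun k m m' =>
    forall x w, B x -> `|(LP k).2 (tadd w (b m)) x - (LP k).2 (tadd w (b m')) x| <= dk k).
  move=> k S cofS; have [_ tP _] := LP_P k.
  have [S' S'P] := trig_poly_shift_cofinal csY b (compactB B calB_B) tP (dk0 k) cofS.
  by exists S'.
exists phi; split => // eps eps0.
pose M := Num.truncn (9 / eps).
have dkM : 9 * dk M < eps.
  have := truncnS_gt (9 / eps); rewrite -/M => M_gt.
  by rewrite /dk mulrC ltr_pdivrMl ?ltr0n // -ltr_pdivrMr // mulrC.
exists M => i j Mi Mj; have [LM0 _ DS_PF] := LP_P M.
apply: (DW_lt (L := (LP M).1) _ dkM eps0) => l lM.
apply: (DS_shift_le p1 (lt_le_trans LM0 lM) (ltW (dk0 M))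
    (fun t => Rb t (phi i)) (fun t => Rb t (phi j)) (DS_PF l lM)).
exact: phi_close.
Qed.
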